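(* For simplices $\sigma,\tau$ on $\gamma_d$, we have $\sigma<_{d+1}\tau$ if and only if $\sigma$ and $\tau$ are $(d+2)$-interlacing in such a way that: when $d$ is even, there is such an interlacing sequence beginning with an element of $\sigma$ but none beginning with an element of $\tau$; when $d$ is odd, there is such an interlacing sequence beginning with an element of $\tau$ but none beginning with an element of $\sigma$.
   Context: $\gamma_d=\{(t,t^2,\dots,t^d):t\in\mathbb{R}\}$; points on it are ordered by parameter. A simplex on $\gamma_d$ is a subset $\sigma\subseteq\gamma_d$ with $|\sigma|\le d+1$, identified with $\mathrm{conv}(\sigma)$. Two simplices overlap in $\mathbb{R}^d$ if $\mathrm{conv}(\sigma)\cap\mathrm{conv}(\tau)\supsetneq\mathrm{conv}(\sigma\cap\tau)$. Subsets $\sigma,\tau$ are $k$-interlacing if there are elements $v_1<\dots<v_k$ of $\sigma\cup\tau$ alternating in membership, either $v_1\in\sigma,v_2\in\tau,v_3\in\sigma,\dots$ (beginning with $\sigma$) or $v_1\in\tau,v_2\in\sigma,\dots$ (beginning with $\tau$). For $\sigma=\{\gamma_d(t_1),\dots,\gamma_d(t_k)\}$ the lifting is $\hat\sigma=\{\gamma_{d+1}(t_i)\}$ and the height function $h_\sigma:\mathrm{conv}(\sigma)\to\mathbb{R}$ gives the last coordinate of the point of $\mathrm{conv}(\hat\sigma)$ projecting to $p$. The relation $\sigma<_{d+1}\tau$ holds iff $\sigma$ and $\tau$ overlap in $\mathbb{R}^d$ and $h_\sigma\le h_\tau$ on $\mathrm{conv}(\sigma)\cap\mathrm{conv}(\tau)$.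 *)

From HB Require Import structures.
From mathcomp Require Import all_boot all_order all_algebra.
From mathcomp Require Import reals.
Unset Printing Implicit Defensive.
Import Order.TTheory GRing.Theory Num.Theory.
Local Open Scope ring_scope.

Section MomentCurve.
Variable R : realType.

(* A simplex on gamma_d is given by its (distinct) parameters:
   s : seq R with uniq s and size s <= d+1.  The vertex of parameter t is
   gamma_d(t) = (t, t^2, ..., t^d); a point of R^d is a map 'I_d -> R. *)
Definition is_simplex (d : nat) (s : seq R) : Prop :=
  uniq s /\ (size s <= d.+1)%N.

Definition mcurve (d : nat) (t : R) : 'I_d -> R := fun i => t ^+ i.+1.

Definition conv_weights (d : nat) (s : seq R) (l : R -> R) (p : 'I_d -> R) : Prop :=
  (forall t, t \in s -> 0 <= l t) /\
  \sum_(t <- s) l t = 1 /\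
  forall i : 'I_d, p i = \sum_(t <- s) l t * mcurve d t i.

Definition in_conv (d : nat) (s : seq R) (p : 'I_d -> R) : Prop :=
  exists l, conv_weights d s l p.

Definition sinter (s u : seq R) : seq R := [seq t <- s | t \in u].

Definition overlap (d : nat) (s u : seq R) : Prop :=
  (forall p, in_conv d (sinter s u) p -> in_conv d s p /\ in_conv d u p) /\
  (exists p, in_conv d s p /\ in_conv d u p /\ ~ in_conv d (sinter s u) p).

(* h is the last coordinate of a point of conv(hat s) (the lifting of s to
   gamma_{d+1}) whose projection to the first d coordinates is p. *)
Definition is_height (d : nat) (s : seq R) (p : 'I_d -> R) (h : R) : Prop :=
  exists l, conv_weights d s l p /\ h = \sum_(t <- s) l t * t ^+ d.+1.

Definition below (d : nat) (s u : seq R) : Prop :=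
  overlap d s u /\
  forall p hs hu, in_conv d s p -> in_conv d u p ->
    is_height d s p hs -> is_height d u p hu -> hs <= hu.

(* there are v_1 < ... < v_k alternating in membership, v_1 \in A, v_2 \in B,
   v_3 \in A, ...  (a k-interlacing sequence of A, B beginning with A) *)
Definition interlace_from (k : nat) (A B : seq R) : Prop :=
  exists v : seq R, size v = k /\ sorted <%R v /\
    forall j, (j < k)%N -> nth 0 v j \in (if odd j then B else A).

End MomentCurve.

Arguments is_simplex {R}.
Arguments mcurve {R}.
Arguments conv_weights {R}.
Arguments in_conv {R}.
Arguments sinter {R}.
Arguments overlap {R}.
Arguments is_height {R}.
Arguments below {R}.
Arguments interlace_from {R}.

(* Write a point p of conv(sigma) /\ conv(tau) as
   p = sum la(x) gamma_d(x) = sum mu(y) gamma_d(y) with convex weights la on sigma and mu on tau.  The signed weight w = la - mu on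
   sigma \/ tau kills every polynomial of degree <= d, and h_sigma(p) - h_tau(p) is its
   moment sum w(x) x^(d+1).  If, read from left to right, the signs of w do not alternate
   d+2 times starting with a positive one, a monic polynomial q of degree d+1 with
   (-1)^d w q > 0 off the zeros of w can be built root by root; as w kills q - X^(d+1),
   the moment (-1)^d sum w(x) x^(d+1) is then positive.  Such an alternation is exactly an
   interlacing sequence of sigma and tau of length d+2.  Conversely, on an interlacing
   sequence of length d+2 the kernel of the Vandermonde matrix alternates in sign, and its
   positive and negative parts represent a point outside conv(sigma /\ tau) at which the
   heights compare the other way. *)

From HB Require Import structures.
From mathcomp Require Import all_boot all_order all_algebra.
From mathcomp Require Import reals.
From mathcomp Require Import ring lra.
From Stdlib Require Import Classical.
Set Implicit Arguments.
Unset Strict Implicit.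
Unset Printing Implicit Defensive.

Import Order.TTheory GRing.Theory Num.Theory.
Local Open Scope ring_scope.

Section SignAlternation.
Variable R : realFieldType.
Implicit Types (S u v : seq R) (w : R -> R).

Definition vanishing_moments S w (d : nat) :=
  forall i, (i <= d)%N -> \sum_(x <- S) w x * x ^+ i = 0.

Definition sign_alternation (n : nat) S w :=
  exists v, [/\ size v = n, sorted <%R v, {subset v <= S} &
    forall j, (j < n)%N -> 0 < (-1) ^+ j * w (nth 0 v j)].

Lemma sign_alternation_size n S w : sign_alternation n S w -> (n <= size S)%N.
Proof. by case=> v [<- /lt_sorted_uniq vU vS _]; exact: uniq_leq_size. Qed.

Lemma exists_upper_bound S : exists c, forall x, x \in S -> x < c.
Proof.
elim: S => [|a S [c ltSc]]; first by exists 0.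
exists (Num.max c (a + 1)) => x; rewrite inE lt_max => /predU1P[->|/ltSc->//].
by rewrite ltrDl ltr01 orbT.
Qed.

Lemma exists_gap_below S b : exists2 c, c < b & forall x, x \in S -> x < b -> x < c.
Proof.
elim: S => [|a S [c ltcb gapS]]; first by exists (b - 1); rewrite ?gtrBl ?ltr01.
case: (ltP a b) => [ltab | leba].
  exists (Num.max c ((a + b) / 2)); first by rewrite gt_max ltcb /=; lra.
  move=> x; rewrite inE lt_max => /predU1P[-> _|xS /(gapS x xS)->//].
  by apply/orP; right; lra.
exists c => // x; rewrite inE => /predU1P[-> /(le_lt_trans leba)|]; first by rewrite ltxx.
exact: gapS.
Qed.

Lemma exists_min S : S != [::] -> exists2 y, y \in S & forall x, x \in S -> y <= x.
Proof.
case def_s: (sort <=%R S) => [|y r] nzS.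
  by move: nzS; rewrite -size_eq0 -(size_sort <=%R) def_s.
have: sorted <=%R (y :: r) by rewrite -def_s sort_sorted //; exact: le_total.
rewrite /= (path_sortedE le_trans) => /andP[/allP yr _].
exists y => [|x]; rewrite -(mem_sort <=%R) def_s; first exact: mem_head.
by rewrite inE => /predU1P[->|/yr].
Qed.

Lemma exists_separator S (P : pred R) : exists c, [/\ c \notin S,
  forall x, x \in S -> P x -> c < x &
  forall x, x \in S -> c < x -> exists2 y, (y \in S) && P y & y <= x].
Proof.
case: (boolP (has P S)) => [hasP | /hasPn noP]; last first.
  have [c ltSc] := exists_upper_bound S.
  exists c; split=> [|x xS|x /ltSc/lt_trans/[apply]]; rewrite ?ltxx //.
    by apply/negP => /ltSc; rewrite ltxx.
  by rewrite (negbTE (noP x xS)).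
have [|y] := @exists_min [seq x <- S | P x]; first by rewrite -has_filter.
rewrite mem_filter => /andP[Py yS] miny.
have [c ltcy gap] := exists_gap_below S y.
have yle x : x \in S -> c < x -> y <= x.
  by move=> xS ltcx; rewrite leNgt; apply/negP => /(gap x xS); rewrite ltNge (ltW ltcx).
exists c; split=> [|x xS Px|x xS /(yle x xS) le_yx]; last by exists y; rewrite ?yS.
  by apply/negP => /gap/(_ ltcy); rewrite ltxx.
by apply: lt_le_trans ltcy _; apply: miny; rewrite mem_filter Px.
Qed.

Lemma no_sign_alternation_monic S k w : ~ sign_alternation k.+1 S w ->
  exists q : {poly R}, [/\ q \is monic, size q = k.+1 &
    forall x, x \in S -> w x != 0 -> (-1) ^+ k * w x * q.[x] < 0].
Proof.
elim: k w => [|k IH] w noalt.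
  exists 1; split=> [||x xS wx]; rewrite ?monic1 ?size_poly1 //.
  rewrite hornerC expr0 mul1r mulr1 lt_neqAle wx leNgt; apply/negP => wx_gt0.
  apply: noalt; exists [:: x]; split=> // [y|[]// _].
    by rewrite inE => /eqP->.
  by rewrite expr0 mul1r.
(* c lies just left of the first point where w > 0: an alternation of w (c - X) then lies
   right of c, so it alternates for - w and extends by that point to one of w. *)
have [c [cS Pc Sc]] := exists_separator S (fun x => 0 < w x).
have [|q [qm qsz qsgn]] := IH (fun x => w x * (c - x)); last first.
  exists (q * ('X - c%:P)); split.
  - by rewrite monicMl ?monicXsubC.
  - by rewrite size_Mmonic ?monic_neq0 ?monicXsubC // qsz size_XsubC addn2.
  move=> x xS wx; have xc : c - x != 0 by rewrite subr_eq0; apply: contraNneq cS => ->.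
  have := qsgn x xS (mulf_neq0 wx xc).
  by rewrite hornerM hornerXsubC exprS; congr (_ < 0); ring.
move=> [[|v0 v] [// [szv] sv vS altv]]; apply: noalt.
have v0S : v0 \in S by apply: vS; exact: mem_head.
have lt_cv0 : c < v0.
  rewrite ltNge; apply/negP => le_v0c; have := altv 0%N isT.
  rewrite expr0 mul1r /=; case: (ltP 0 (w v0)) => [/(Pc v0 v0S)|wv0].
    by rewrite ltNge le_v0c.
  by rewrite ltNge mulr_le0_ge0 // subr_ge0.
have lt_cv j : (j < k.+1)%N -> c < nth 0 (v0 :: v) j.
  case: j => // j; rewrite ltnS -szv => jv; apply: lt_trans lt_cv0 _.
  move: sv; rewrite /= (path_sortedE lt_trans) => /andP[/allP-> //].
  exact: mem_nth.
have altNv j : (j < k.+1)%N -> 0 < (-1) ^+ j * - w (nth 0 (v0 :: v) j).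
  move=> jk; have := altv j jk; rewrite mulrA (nmulr_lgt0 _ _); last first.
    by rewrite subr_lt0 lt_cv.
  by rewrite mulrN oppr_gt0.
have [y /andP[yS wy] le_yv0] := Sc v0 v0S lt_cv0.
have lt_yv0 : y < v0.
  rewrite lt_neqAle le_yv0 andbT; apply: contraTneq wy => ->.
  by have := altNv 0%N isT; rewrite expr0 mul1r oppr_gt0 -leNgt => /ltW.
exists [:: y, v0 & v]; split=> //=; first by rewrite szv.
- by rewrite lt_yv0.
- by move=> x; rewrite inE => /predU1P[->//|]; exact: vS.
case=> [_|j]; first by rewrite expr0 mul1r.
by rewrite ltnS exprS mulN1r mulNr -mulrN; exact: altNv.
Qed.

Lemma sumr_gt0_has S (F : R -> R) : (forall x, x \in S -> 0 <= F x) ->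
  has (fun x => 0 < F x) S -> 0 < \sum_(x <- S) F x.
Proof.
move=> F_ge0 hasF; rewrite (bigID (fun x => 0 < F x)) /=.
have h1 : 0 <= \sum_(x <- S | ~~ (0 < F x)) F x.
  by rewrite big_seq_cond; apply: sumr_ge0 => x /andP[/F_ge0].
have h2 : 0 < \sum_(x <- S | 0 < F x) F x.
  by have := @ltr_sum _ _ S _ (fun=> 0) F hasF (fun x Fx => Fx); rewrite big1_eq.
by rewrite ltr_pwDl.
Qed.

Lemma sumr_support_eq (s1 s2 : seq R) (F : R -> R) : uniq s1 -> uniq s2 ->
  (forall x, F x != 0 -> (x \in s1) = (x \in s2)) ->
  \sum_(x <- s1) F x = \sum_(x <- s2) F x.
Proof.
move=> u1 u2 supp; apply/perm_big_supp/uniq_perm; rewrite ?filter_uniq // => x.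
by rewrite !mem_filter; case: eqVneq => // /supp.
Qed.

Lemma sum_poly_vanishing S w d (q : {poly R}) :
  vanishing_moments S w d -> (size q <= d.+1)%N -> \sum_(x <- S) w x * q.[x] = 0.
Proof.
move=> wm szq; transitivity (\sum_(i < size q) q`_i * \sum_(x <- S) w x * x ^+ i).
  under eq_bigr do rewrite horner_coef mulr_sumr.
  rewrite exchange_big; apply: eq_bigr => i _; rewrite mulr_sumr.
  by apply: eq_bigr => x _; rewrite mulrCA.
by rewrite big1 // => i _; rewrite wm ?mulr0 // -ltnS (leq_trans (ltn_ord i)).
Qed.

Lemma top_moment_sign S w d :
  vanishing_moments S w d -> has (fun x => w x != 0) S -> ~ sign_alternation d.+2 S w ->
  0 < (-1) ^+ d * \sum_(x <- S) w x * x ^+ d.+1.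
Proof.
move=> wm nzw /no_sign_alternation_monic[q [qm qsz qsgn]].
have szqX : (size (q - 'X^(d.+1))%R <= d.+1)%N.
  apply/leq_sizeP => j; rewrite leq_eqVlt coefB coefXn => /predU1P[<-|lt_dj].
    by rewrite eqxx -[d.+1]/(d.+2.-1) -qsz -lead_coefE (monicP qm) subrr.
  by rewrite gtn_eqF // nth_default ?subrr // qsz.
have <- : \sum_(x <- S) w x * q.[x] = \sum_(x <- S) w x * x ^+ d.+1.
  apply/eqP; rewrite -subr_eq0 -sumrB; apply/eqP.
  rewrite -[RHS](sum_poly_vanishing wm szqX); apply: eq_bigr => x _.
  by rewrite hornerD hornerN hornerXn mulrBr.
have pos x : x \in S -> w x != 0 -> 0 < (-1) ^+ d * (w x * q.[x]).
  by move=> xS /(qsgn x xS); rewrite exprS mulN1r !mulNr oppr_lt0 mulrA.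
rewrite mulr_sumr; apply: sumr_gt0_has => [x xS|].
  by have [->|/(pos x xS)/ltW//] := eqVneq (w x) 0; rewrite !mul0r mulr0.
by case/hasP: nzw => x xS /(pos x xS) ?; apply/hasP; exists x.
Qed.

Lemma vanishing_momentsN S w d :
  vanishing_moments S w d -> vanishing_moments S (fun x => - w x) d.
Proof. by move=> wm i le_id; under eq_bigr do rewrite mulNr; rewrite sumrN wm ?oppr0. Qed.

Lemma top_moment_signN S w d :
  vanishing_moments S w d -> has (fun x => w x != 0) S ->
  ~ sign_alternation d.+2 S (fun x => - w x) ->
  (-1) ^+ d * \sum_(x <- S) w x * x ^+ d.+1 < 0.
Proof.
move=> wm nzw /(top_moment_sign (vanishing_momentsN wm)).
under eq_has do rewrite oppr_eq0; under eq_bigr do rewrite mulNr.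
by rewrite sumrN mulrN oppr_gt0 => /(_ nzw).
Qed.

Lemma exists_sign_alternation S w d :
  vanishing_moments S w d -> has (fun x => w x != 0) S ->
  sign_alternation d.+2 S w \/ sign_alternation d.+2 S (fun x => - w x).
Proof.
move=> wm nzw; case: (classic (sign_alternation d.+2 S w)) => [|noalt]; first by left.
case: (classic (sign_alternation d.+2 S (fun x => - w x))) => [|noaltN]; first by right.
have := top_moment_sign wm nzw noalt.
by rewrite ltNge ltW // (top_moment_signN wm nzw noaltN).
Qed.

Lemma vanishing_moments_eq0 S w d : (size S <= d.+1)%N ->
  vanishing_moments S w d -> forall x, x \in S -> w x = 0.
Proof.
move=> szS wm x xS; apply/eqP/negPn/negP => wx.
have nzw : has (fun x => w x != 0) S by apply/hasP; exists x.
by case: (exists_sign_alternation wm nzw) => /sign_alternation_size/leq_trans/(_ szS);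
  rewrite ltnn.
Qed.

Lemma vanishing_moments_kernel u d : uniq u -> size u = d.+2 ->
  exists w, [/\ vanishing_moments u w d, has (fun x => w x != 0) u &
                forall x, x \notin u -> w x = 0].
Proof.
move=> uu szu; pose A : 'M[R]_(d.+2, d.+1) := \matrix_(j, i) u`_j ^+ i.
have /matrix0Pn[i [j Kij]] : kermx A != 0.
  by rewrite -mxrank_eq0 mxrank_ker subn_eq0 -ltnNge ltnS rank_leq_col.
pose w x := if x \in u then kermx A i (inord (index x u)) else 0.
have wu (k : 'I_d.+2) : w u`_k = kermx A i k.
  by rewrite /w mem_nth ?szu // index_uniq ?szu // inord_val.
exists w; split=> [k le_kd||x /negbTE xu]; last by rewrite /w xu.
  rewrite (big_nth 0) szu big_mkord.
  transitivity ((kermx A *m A) i (inord k)); last by rewrite mulmx_ker mxE.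
  by rewrite mxE; apply: eq_bigr => l _; rewrite wu [A _ _]mxE inordK.
by apply/hasP; exists u`_j; rewrite ?mem_nth ?szu // wu.
Qed.

Lemma sign_alternation_full u w : sorted <%R u -> sign_alternation (size u) u w ->
  forall j, (j < size u)%N -> 0 < (-1) ^+ j * w u`_j.
Proof.
move=> su [v [szv sv vu altv]].
have [_ /(lt_sorted_eq sv su) eq_vu] :=
  uniq_min_size (lt_sorted_uniq sv) vu (eq_leq (esym szv)).
by move: altv; rewrite eq_vu.
Qed.

Lemma alternating_vanishing_moments u d : sorted <%R u -> size u = d.+2 ->
  exists w, [/\ vanishing_moments u w d,
    forall j, (j < d.+2)%N -> 0 < (-1) ^+ j * w u`_j & forall x, x \notin u -> w x = 0].
Proof.
move=> su szu; have [w [wm nzw w0]] := vanishing_moments_kernel (lt_sorted_uniq su) szu.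
case: (exists_sign_alternation wm nzw); rewrite -szu => /(sign_alternation_full su).
  by exists w.
exists (fun x => - w x); split=> //; first exact: vanishing_momentsN.
by move=> x /w0->; rewrite oppr0.
Qed.

End SignAlternation.

Section MomentCurveSimplices.
Variables (R : realType) (d : nat).
Implicit Types (s t u : seq R) (la mu w : R -> R) (p : 'I_d -> R).

Definition height s la := \sum_(x <- s) la x * x ^+ d.+1.

Lemma conv_weights_eq_in s la mu p :
  conv_weights d s la p -> {in s, la =1 mu} -> conv_weights d s mu p.
Proof.
move=> [la_ge0 [la1 lap]] eq_la; split=> [x xs|]; first by rewrite -eq_la ?la_ge0.
split=> [|i]; first by rewrite -la1; apply: eq_big_seq => x /eq_la.
by rewrite lap; apply: eq_big_seq => x /eq_la->.
Qed.

Lemma conv_weights_support s1 s2 la p : uniq s1 -> uniq s2 ->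
  (forall x, la x != 0 -> (x \in s1) = (x \in s2)) ->
  conv_weights d s1 la p -> conv_weights d s2 la p.
Proof.
move=> u1 u2 supp [la_ge0 [la1 lap]]; split=> [x xs2|].
  by have [->//|/supp eqs] := eqVneq (la x) 0; rewrite la_ge0 ?eqs.
split=> [|i]; first by rewrite -la1; apply/esym/sumr_support_eq.
by rewrite lap; apply: sumr_support_eq => // x; rewrite mulf_eq0 negb_or => /andP[/supp].
Qed.

Lemma conv_weights_moments s t la mu p :
  conv_weights d s la p -> conv_weights d t mu p ->
  forall i, (i <= d)%N -> \sum_(x <- s) la x * x ^+ i = \sum_(x <- t) mu x * x ^+ i.
Proof.
move=> [_ [la1 lap]] [_ [mu1 mup]] [_|i lt_id].
  under eq_bigr do rewrite expr0 mulr1; under [RHS]eq_bigr do rewrite expr0 mulr1.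
  by rewrite la1 mu1.
by have := lap (Ordinal lt_id); rewrite mup.
Qed.

Lemma conv_weights_of_moments s la mu p :
  conv_weights d s la p -> (forall x, x \in s -> 0 <= mu x) ->
  (forall i, (i <= d)%N -> \sum_(x <- s) la x * x ^+ i = \sum_(x <- s) mu x * x ^+ i) ->
  conv_weights d s mu p.
Proof.
move=> [_ [la1 lap]] mu_ge0 mom; split=> //; split=> [|i]; last by rewrite lap mom.
have sum_expr0 l : \sum_(x <- s) l x * x ^+ 0 = \sum_(x <- s) l x.
  by apply: eq_bigr => x _; rewrite mulr1.
by rewrite -la1 -(sum_expr0 mu) -(sum_expr0 la) mom.
Qed.

Lemma conv_weights_unique s la mu p : (size s <= d.+1)%N ->
  conv_weights d s la p -> conv_weights d s mu p -> {in s, la =1 mu}.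
Proof.
move=> szs cla cmu x xs; have wm : vanishing_moments s (fun x => la x - mu x) d.
  move=> i le_id; under eq_bigr do rewrite mulrBl.
  by rewrite sumrB (conv_weights_moments cla cmu) ?subrr.
by apply/eqP; rewrite -subr_eq0 (vanishing_moments_eq0 szs wm).
Qed.

Lemma conv_weights_extend s t la p : uniq s -> uniq t -> {subset s <= t} ->
  conv_weights d s la p -> conv_weights d t (fun x => if x \in s then la x else 0) p.
Proof.
move=> us ut st cla; apply: (conv_weights_support us ut).
  by move=> x; case: ifP => [xs _|_]; rewrite ?eqxx // (st x xs).
by apply: (conv_weights_eq_in cla) => x ->.
Qed.

Lemma sinter_subset s t : {subset sinter s t <= s} /\ {subset sinter s t <= t}.
Proof. by split=> x; rewrite mem_filter => /andP[]. Qed.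

Lemma in_conv_sinter s t p : uniq s -> uniq t ->
  in_conv d (sinter s t) p -> in_conv d s p /\ in_conv d t p.
Proof.
move=> us ut [k ck]; have uI : uniq (sinter s t) := filter_uniq _ us.
have [Is It] := sinter_subset s t.
by split; eexists; apply: conv_weights_extend ck.
Qed.

Lemma in_conv_sinterC s t p : uniq s -> uniq t ->
  in_conv d (sinter s t) p -> in_conv d (sinter t s) p.
Proof.
move=> us ut [k ck]; exists k; apply: conv_weights_support ck; rewrite ?filter_uniq //.
by move=> x _; rewrite !mem_filter andbC.
Qed.

Lemma not_in_conv_sinter s t la mu p x : is_simplex d s -> is_simplex d t ->
  conv_weights d s la p -> conv_weights d t mu p ->
  x \in s -> 0 < la x -> mu x = 0 -> ~ in_conv d (sinter s t) p.
Proof.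
move=> [us szs] [ut szt] cla cmu xs la_gt0 mu0 [k ck].
have uI : uniq (sinter s t) := filter_uniq _ us.
have [Is It] := sinter_subset s t.
have := conv_weights_unique szs cla (conv_weights_extend uI us Is ck) xs.
rewrite mem_filter xs andbT; case: ifP => [xt la_k | _ la0]; last first.
  by move: la_gt0; rewrite la0 ltxx.
have := conv_weights_unique szt cmu (conv_weights_extend uI ut It ck) xt.
by rewrite mem_filter xs xt /= mu0 -la_k => la0; move: la_gt0; rewrite -la0 ltxx.
Qed.

Definition weight_diff s t la mu x :=
  (if x \in s then la x else 0) - (if x \in t then mu x else 0).

Lemma weight_diff_sum s t la mu (g : R -> R) : uniq s -> uniq t ->
  \sum_(x <- undup (s ++ t)) weight_diff s t la mu x * g x =
  \sum_(x <- s) la x * g x - \sum_(x <- t) mu x * g x.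
Proof.
move=> us ut; under eq_bigr do rewrite mulrBl; rewrite sumrB.
have extend s' (l : R -> R) : uniq s' -> {subset s' <= undup (s ++ t)} ->
    \sum_(x <- undup (s ++ t)) (if x \in s' then l x else 0) * g x = \sum_(x <- s') l x * g x.
  move=> us' sub; rewrite (@sumr_support_eq _ _ s') ?undup_uniq //.
    by apply: eq_big_seq => x ->.
  by move=> x; case: ifP => [xs' _|_]; rewrite ?mul0r ?eqxx // (sub x xs').
by rewrite !extend // => x xs; rewrite mem_undup mem_cat xs ?orbT.
Qed.

Lemma weight_diff_moments s t la mu p : uniq s -> uniq t ->
  conv_weights d s la p -> conv_weights d t mu p ->
  vanishing_moments (undup (s ++ t)) (weight_diff s t la mu) d.
Proof.
move=> us ut cla cmu i le_id.
by rewrite weight_diff_sum // (conv_weights_moments cla cmu) ?subrr.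
Qed.

Lemma weight_diff_gt0 s t la mu p x : conv_weights d t mu p ->
  0 < weight_diff s t la mu x -> x \in s.
Proof.
move=> [mu_ge0 _]; rewrite /weight_diff; case: ifP => // _; rewrite sub0r oppr_gt0.
by case: ifP => [/mu_ge0|]; rewrite ?ltxx // ltNge => ->.
Qed.

Lemma weight_diff_lt0 s t la mu p x : conv_weights d s la p ->
  weight_diff s t la mu x < 0 -> x \in t.
Proof.
move=> [la_ge0 _]; rewrite /weight_diff; case: (x \in t) => //; rewrite subr0.
by case: ifP => [/la_ge0|]; rewrite ?ltxx // ltNge => ->.
Qed.

Lemma interlace_of_sign_alternation n (S A B : seq R) w :
  (forall x, 0 < w x -> x \in A) -> (forall x, w x < 0 -> x \in B) ->
  sign_alternation n S w -> interlace_from n A B.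
Proof.
move=> wA wB [v [szv sv _ altv]]; exists v; do 2!split=> //; move=> j /altv.
by rewrite -signr_odd; case: odd; rewrite ?mulN1r ?mul1r ?oppr_gt0; [apply: wB | apply: wA].
Qed.

Lemma overlap_interlace s t : uniq s -> uniq t -> overlap d s t ->
  interlace_from d.+2 s t \/ interlace_from d.+2 t s.
Proof.
move=> us ut [_ [p [[la cla] [[mu cmu] notI]]]].
set w := weight_diff s t la mu; have wm := weight_diff_moments us ut cla cmu.
have [nzw|/hasPn w0] := boolP (has (fun x => w x != 0) (undup (s ++ t))).
  case: (exists_sign_alternation wm nzw) => alt; [left | right];
    apply: (interlace_of_sign_alternation _ _ alt) => x; rewrite ?oppr_gt0 ?oppr_lt0.
  - exact: weight_diff_gt0 cmu.
  - exact: weight_diff_lt0 cla.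
  - exact: weight_diff_lt0 cla.
  - exact: weight_diff_gt0 cmu.
case: notI; exists la; apply: conv_weights_support cla; rewrite ?filter_uniq // => x la_x.
rewrite mem_filter andbC; case: (boolP (x \in s)) => //= xs; apply/esym/negPn/negP => xt.
have := w0 x; rewrite mem_undup mem_cat xs /w /weight_diff xs (negbTE xt) subr0.
by rewrite la_x => /(_ isT).
Qed.

Lemma signed_height_le s t la mu p : uniq s -> uniq t -> ~ interlace_from d.+2 t s ->
  conv_weights d s la p -> conv_weights d t mu p ->
  (-1) ^+ d * (height s la - height t mu) <= 0.
Proof.
move=> us ut noI cla cmu.
rewrite /height -(weight_diff_sum la mu (fun x => x ^+ d.+1) us ut).
set w := weight_diff s t la mu.
have [nzw|/hasPn w0] := boolP (has (fun x => w x != 0) (undup (s ++ t))); last first.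
  by rewrite big1_seq ?mulr0 // => x /andP[_ /w0/negPn/eqP->]; rewrite mul0r.
apply/ltW/(top_moment_signN (weight_diff_moments us ut cla cmu) nzw).
move=> alt; apply: noI; apply: (interlace_of_sign_alternation _ _ alt) => x.
  by rewrite oppr_gt0; exact: weight_diff_lt0 cla.
by rewrite oppr_lt0; exact: weight_diff_gt0 cmu.
Qed.

Lemma interlace_signed_weight s t : interlace_from d.+2 s t -> exists u w,
  [/\ uniq u, vanishing_moments u w d, has (fun x => 0 < w x) u,
      (-1) ^+ d * \sum_(x <- u) w x * x ^+ d.+1 < 0 &
      forall x, (0 < w x -> (x \in u) && (x \in s)) /\ (w x < 0 -> (x \in u) && (x \in t))].
Proof.
move=> [u [szu [su ust]]]; have [w [wm altw w0]] := alternating_vanishing_moments su szu.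
have w_u0 : 0 < w u`_0 by have := altw 0%N isT; rewrite expr0 mul1r.
have u0u : u`_0 \in u by rewrite mem_nth ?szu.
exists u, w; split=> //; first exact: lt_sorted_uniq.
- by apply/hasP; exists u`_0.
- apply: top_moment_signN wm _ _; first by apply/hasP; exists u`_0; rewrite ?gt_eqF.
  rewrite -szu => /(sign_alternation_full su)/(_ 0%N); rewrite szu expr0 mul1r oppr_gt0.
  by move=> /(_ isT)/lt_trans/(_ w_u0); rewrite ltxx.
move=> x; have [xu|/w0->] := boolP (x \in u); last by rewrite ltxx.
have jx : (index x u < d.+2)%N by rewrite -szu index_mem.
have := ust _ jx; have := altw _ jx; rewrite (nth_index 0 xu) /= -signr_odd.
by case: odd; rewrite ?mulN1r ?mul1r ?oppr_gt0 => wx xst; split=> // w'x;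
  move: (lt_trans w'x wx); rewrite ltxx.
Qed.

Lemma vanishing_moments_split S w : vanishing_moments S w d -> has (fun x => 0 < w x) S ->
  exists la mu p c, [/\ conv_weights d S la p, conv_weights d S mu p, 0 < c,
    forall x, la x - mu x = c * w x &
    forall x, (la x != 0 -> 0 < w x) /\ (mu x != 0 -> w x < 0)].
Proof.
move=> wm hasw; pose T := \sum_(x <- S) Num.max (w x) 0.
have max_ge0 (y : R) : 0 <= Num.max y 0 by case: (ger0P y).
have T_gt0 : 0 < T.
  apply: sumr_gt0_has => //; case/hasP: hasw => x xS wx; apply/hasP; exists x => //.
  by case: (ger0P (w x)) => // /lt_trans/(_ wx); rewrite ltxx.
pose la x := Num.max (w x) 0 / T; pose mu x := Num.max (- w x) 0 / T.
have la_mu x : la x - mu x = T^-1 * w x.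
  rewrite -mulrBl mulrC; congr (_ * _).
  by case: (ger0P (w x)); case: (ger0P (- w x)) => *; lra.
have la_ge0 x : 0 <= la x by rewrite divr_ge0 ?max_ge0 ?ltW.
have cla : conv_weights d S la (fun i => \sum_(x <- S) la x * mcurve d x i).
  by split=> [x _|]; [exact: la_ge0 | split=> //; rewrite -mulr_suml divff ?gt_eqF].
exists la, mu, (fun i => \sum_(x <- S) la x * mcurve d x i), T^-1; split=> //.
- apply: conv_weights_of_moments cla _ _ => [x _|i le_id].
    by rewrite divr_ge0 ?max_ge0 ?ltW.
  apply/eqP; rewrite -subr_eq0 -sumrB.
  under eq_bigr do rewrite -mulrBl la_mu -mulrA.
  by rewrite -mulr_sumr wm ?mulr0.
- by rewrite invr_gt0.
move=> x; split; rewrite mulf_eq0 negb_or invr_eq0 (gt_eqF T_gt0) andbT.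
  by case: (ger0P (w x)) => [hx|]; rewrite ?eqxx // lt_def hx andbT.
by case: (ger0P (- w x)) => [hx|]; rewrite ?eqxx // -oppr_gt0 lt_def hx andbT.
Qed.

Lemma interlace_separating_point s t : is_simplex d s -> is_simplex d t ->
  interlace_from d.+2 s t -> exists p la mu,
  [/\ conv_weights d s la p, conv_weights d t mu p,
      (-1) ^+ d * (height s la - height t mu) < 0 & ~ in_conv d (sinter s t) p].
Proof.
move=> [us szs] [ut szt] /interlace_signed_weight[u [w [uu wm hasw top wst]]].
have [la [mu [p [c [cla cmu c_gt0 la_mu supp]]]]] := vanishing_moments_split wm hasw.
have la_s x : la x != 0 -> (x \in u) = (x \in s).
  by move=> /(supp x).1/(wst x).1/andP[-> ->].
have mu_t x : mu x != 0 -> (x \in u) = (x \in t).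
  by move=> /(supp x).2/(wst x).2/andP[-> ->].
have heights : height s la - height t mu = c * \sum_(x <- u) w x * x ^+ d.+1.
  rewrite /height (@sumr_support_eq _ s u) ?(@sumr_support_eq _ t u) //; last 2 first.
  - by move=> x; rewrite mulf_eq0 negb_or => /andP[/mu_t->].
  - by move=> x; rewrite mulf_eq0 negb_or => /andP[/la_s->].
  by rewrite -sumrB mulr_sumr; apply: eq_bigr => x _; rewrite -mulrBl la_mu mulrA.
case/hasP: hasw => x0 _ wx0.
have mu0 : mu x0 = 0 by apply/eqP/negPn/negP => /(supp x0).2; rewrite ltNge (ltW wx0).
have x0s : x0 \in s by case/andP: ((wst x0).1 wx0).
have la_x0 : 0 < la x0 by rewrite -(subr0 (la x0)) -{2}mu0 la_mu pmulr_rgt0.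
have cla_s := conv_weights_support uu us la_s cla.
have cmu_t := conv_weights_support uu ut mu_t cmu.
exists p, la, mu; split=> //; first by rewrite heights mulrCA pmulr_rlt0.
exact: (not_in_conv_sinter (conj us szs) (conj ut szt) cla_s cmu_t x0s la_x0 mu0).
Qed.

Lemma overlap_iff s t : is_simplex d s -> is_simplex d t ->
  overlap d s t <-> interlace_from d.+2 s t \/ interlace_from d.+2 t s.
Proof.
move=> simp_s simp_t; have [us _] := simp_s; have [ut _] := simp_t.
split=> [|hI]; first exact: overlap_interlace.
split=> [p|]; first exact: in_conv_sinter.
case: hI => [/(interlace_separating_point simp_s simp_t)
            | /(interlace_separating_point simp_t simp_s)] [p [la [mu [cla cmu _ notI]]]].
  by exists p; split; [exists la | split; [exists mu|]].
exists p; split; [exists mu | split; [exists la | move/(in_conv_sinterC us ut)]] => //.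
Qed.

Definition heights_below s t := forall p la mu,
  conv_weights d s la p -> conv_weights d t mu p -> height s la <= height t mu.

Lemma belowE s t : below d s t <-> overlap d s t /\ heights_below s t.
Proof.
split=> -[ov hb]; split=> // p.
  move=> la mu cla cmu; apply: (hb p).
  - by exists la.
  - by exists mu.
  - by exists la.
  - by exists mu.
by move=> _ _ _ _ [la [cla ->]] [mu [cmu ->]]; exact: hb cmu.
Qed.

Lemma heights_below_iff s t : is_simplex d s -> is_simplex d t ->
  heights_below s t <->
  ~ (if odd d then interlace_from d.+2 s t else interlace_from d.+2 t s).
Proof.
move=> simp_s simp_t; have [us _] := simp_s; have [ut _] := simp_t.
have : (-1) ^+ d = (if odd d then -1 else 1) :> R by rewrite -signr_odd; case: odd.
case: odd => sgn; split.
- move=> hb /(interlace_separating_point simp_s simp_t)[p [la [mu [cla cmu]]]].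
  by rewrite sgn mulN1r oppr_lt0 subr_gt0 ltNge (hb _ _ _ cla cmu).
- move=> noI p la mu cla cmu; have := signed_height_le ut us noI cmu cla.
  by rewrite sgn mulN1r oppr_le0 subr_ge0.
- move=> hb /(interlace_separating_point simp_t simp_s)[p [mu [la [cmu cla]]]].
  by rewrite sgn mul1r subr_lt0 ltNge (hb _ _ _ cla cmu).
- move=> noI p la mu cla cmu; have := signed_height_le us ut noI cla cmu.
  by rewrite sgn mul1r subr_le0.
Qed.

End MomentCurveSimplices.

Theorem proposition2p4 (R : realType) (d : nat) (sigma tau : seq R) :
  is_simplex d sigma -> is_simplex d tau ->
  (below d sigma tau <->
   ((~~ odd d -> interlace_from d.+2 sigma tau /\ ~ interlace_from d.+2 tau sigma) /\
    (odd d -> interlace_from d.+2 tau sigma /\ ~ interlace_from d.+2 sigma tau))).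
Proof.
move=> simp_sigma simp_tau.
rewrite belowE (overlap_iff simp_sigma simp_tau) (heights_below_iff simp_sigma simp_tau).
by case: (odd d); rewrite /is_true /=; intuition.
Qed.
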